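(* Consider the following TDCD process. Let $N\ge 1$ silos each contain $K\ge 1$ clients, let $D=D_1+\dots+D_N$, and write every $\theta\in\mathbb{R}^D$ in blocks $\theta=[\theta_{(1)}^T,\dots,\theta_{(N)}^T]^T$ with $\theta_{(j)}\in\mathbb{R}^{D_j}$. Fix an integer $Q\ge1$ and $\eta>0$. Client $k$ of silo $j$ holds $\theta^t_{k,j}\in\mathbb{R}^{D_j}$. Define $\tilde\theta^t_{(j)}=\frac1K\sum_k\theta^t_{k,j}$. At every multiple $t$ of $Q$, each $\theta^t_{k,j}$ is reset to $\tilde\theta^t_{(j)}$. Define $y^t_{k,j}\in\mathbb{R}^D$ by $(y^t_{k,j})_{(j)}=\theta^t_{k,j}$ and $(y^t_{k,j})_{(l)}=\tilde\theta^{t_0}_{(l)}$ for $l\ne j$, where $t_0$ is as defined below. The update is $\theta^{t+1}_{k,j}=\theta^t_{k,j}-\eta\, g_{k,j}(y^t_{k,j})$, where $g_{k,j}(\cdot)\in\mathbb{R}^{D_j}$ is the stochastic partial gradient computed by client $k$ of silo $j$ on the current minibatch. Let $t_0$ be the most recent iteration prior to iteration $t$ in which the hubs exchanged information and sent new models to the clients, i.e., the most recent synchronization iteration (with $t-t_0\le Q$). Then for every silo $j$, $$\frac1K\sum_{k=1}^K\|\tilde\theta^t_{(j)}-\theta^t_{k,j}\|^2\le\frac{Q\eta^2}{K}\sum_{k=1}^K\sum_{\tau=t_0}^{t-1}\|g_{k,j}(y^\tau_{k,j})\|^2.$$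
   Context: Here $\theta^t_{k,j}$ is the block-$j$ component of $y^t_{k,j}$; the paper denotes it $y^t_{k,j,(j)}$. *)

From HB Require Import structures.
From mathcomp Require Import all_boot all_order all_algebra.
Set Implicit Arguments. Unset Strict Implicit. Unset Printing Implicit Defensive.
Import Order.TTheory GRing.Theory Num.Theory.
Local Open Scope ring_scope.

(* A vector of R^D, D = D_1 + ... + D_N, represented by its N blocks. *)
Definition blockvec (R : Type) (N : nat) (D : 'I_N -> nat) :=
  forall l : 'I_N, 'rV[R]_(D l).

Definition set_block (R : Type) (N : nat) (D : 'I_N -> nat)
  (f : blockvec R D) (j : 'I_N) (v : 'rV[R]_(D j)) : blockvec R D :=
  fun l => match j =P l with
           | ReflectT e => ecast l 'rV[R]_(D l) e v
           | ReflectF _ => f l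
           end.

Definition sqnorm (R : pzRingType) (n : nat) (v : 'rV[R]_n) : R :=
  \sum_(i < n) v 0 i ^+ 2.

Definition avg (R : fieldType) (K n : nat) (th : 'I_K -> 'rV[R]_n) : 'rV[R]_n :=
  K%:R^-1 *: \sum_(k < K) th k.

Definition lastsync (Q t : nat) : nat := (t %/ Q * Q)%N.

Section TDCD.
Variables (R : fieldType) (N K : nat) (D : 'I_N -> nat) (Q : nat).
(* theta t k j : model of client k of silo j at iteration t (after any reset) *)
Variable theta : nat -> 'I_K -> forall j : 'I_N, 'rV[R]_(D j).

Definition tilde (t : nat) (j : 'I_N) : 'rV[R]_(D j) :=
  avg (fun k => theta t k j).

Definition yvec (t : nat) (k : 'I_K) (j : 'I_N) : blockvec R D :=
  @set_block R N D (fun l => tilde (lastsync Q t) l) j (theta t k j).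
End TDCD.

(* The TDCD process: g t k j is the stochastic partial gradient map of client
   k of silo j on its minibatch at iteration t. At each multiple of Q the
   models are reset to the silo average. *)
Definition TDCD_process (R : fieldType) (N K : nat) (D : 'I_N -> nat) (Q : nat)
  (eta : R)
  (g : nat -> 'I_K -> forall j : 'I_N, blockvec R D -> 'rV[R]_(D j))
  (theta : nat -> 'I_K -> forall j : 'I_N, 'rV[R]_(D j)) : Prop :=
  (forall k j, theta 0%N k j = tilde theta 0%N j) /\
  (forall t k j,
     let pre := fun k' : 'I_K =>
       theta t k' j - eta *: g t k' j (yvec Q theta t k' j) in
     theta t.+1 k j = if (Q %| t.+1)%N then avg pre else pre k).

From HB Require Import structures.
From mathcomp Require Import all_boot all_order all_algebra.
From mathcomp Require Import ring lra.
Set Implicit Arguments. Unset Strict Implicit. Unset Printing Implicit Defensive.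
Import Order.TTheory GRing.Theory Num.Theory.
Local Open Scope ring_scope.

(* Between two synchronizations a client's block moves away from the common
   starting point tilde(t0) by eta times the sum of its own gradients, so by
   Cauchy-Schwarz its squared distance to tilde(t0) is at most
   (t - t0) eta^2 sum ||g||^2 with t - t0 <= Q.  The silo average minimizes
   the mean squared distance to the clients, so replacing tilde(t0) by
   tilde(t) only decreases the left-hand side. *)

Section SquareSums.
Variable R : realFieldType.

Lemma sqr_sum_nat_le (m n : nat) (b : nat -> R) :
  (\sum_(m <= i < n) b i) ^+ 2 <= (n - m)%:R * \sum_(m <= i < n) b i ^+ 2.
Proof.
rewrite -(@ler_pM2l _ 2) //.
have -> : 2 * ((n - m)%:R * \sum_(m <= i < n) b i ^+ 2) =
          \sum_(m <= i < n) \sum_(m <= l < n) (b i ^+ 2 + b l ^+ 2).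
  under [RHS]eq_bigr => i _ do rewrite big_split /= sumr_const_nat.
  rewrite big_split /= sumr_const_nat sumrMnl; ring.
rewrite expr2 mulr_suml mulr_sumr; apply: ler_sum => i _.
rewrite !mulr_sumr; apply: ler_sum => l _.
have := sqr_ge0 (b i - b l); lra.
Qed.

Lemma sum_sqr_mean_sub_le (K : nat) (x : 'I_K -> R) (c : R) : (0 < K)%N ->
  \sum_(k < K) (K%:R^-1 * \sum_(l < K) x l - x k) ^+ 2
    <= \sum_(k < K) (c - x k) ^+ 2.
Proof.
move=> K_gt0; set a := K%:R^-1 * _.
have sum_x : \sum_(l < K) x l = K%:R * a.
  by rewrite /a mulrA mulfV ?mul1r // pnatr_eq0 -lt0n.
rewrite -subr_ge0 -sumrB; clearbody a.
(* sum_k (c - x k)^2 - (a - x k)^2 = K (c - a)^2 once sum_k x k = K a *)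
rewrite (eq_bigr (fun k => (c - a) * (c + a) - 2 * (c - a) * x k)); last first.
  by move=> k _; ring.
rewrite sumrB -!mulr_sumr sum_x sumr_const card_ord.
rewrite (_ : _ - _ = K%:R * (c - a) ^+ 2); last by ring.
by rewrite mulr_ge0 ?ler0n ?sqr_ge0.
Qed.

End SquareSums.

Section SquaredNorm.
Variable R : realFieldType.

Lemma sqnorm_ge0 (n : nat) (v : 'rV[R]_n) : 0 <= sqnorm v.
Proof. by apply: sumr_ge0 => i _; apply: sqr_ge0. Qed.

Lemma sqnorm0 (n : nat) : sqnorm (0 : 'rV[R]_n) = 0.
Proof. by rewrite /sqnorm big1 // => i _; rewrite mxE expr0n. Qed.

Lemma sqnormZ (n : nat) (a : R) (v : 'rV[R]_n) :
  sqnorm (a *: v) = a ^+ 2 * sqnorm v.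
Proof.
by rewrite /sqnorm mulr_sumr; apply: eq_bigr => i _; rewrite mxE exprMn.
Qed.

Lemma sqnorm_sum_nat_le (m n p : nat) (v : nat -> 'rV[R]_p) :
  sqnorm (\sum_(m <= i < n) v i) <= (n - m)%:R * \sum_(m <= i < n) sqnorm (v i).
Proof.
rewrite /sqnorm exchange_big mulr_sumr /=; apply: ler_sum => c _.
by rewrite summxE sqr_sum_nat_le.
Qed.

Lemma sum_sqnorm_avg_sub_le (K n : nat) (th : 'I_K -> 'rV[R]_n) (c : 'rV[R]_n) :
  (0 < K)%N ->
  \sum_(k < K) sqnorm (avg th - th k) <= \sum_(k < K) sqnorm (c - th k).
Proof.
move=> K_gt0; rewrite /sqnorm exchange_big [X in _ <= X]exchange_big /=.
apply: ler_sum => i _.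
under eq_bigr => k _ do rewrite !mxE summxE.
under [X in _ <= X]eq_bigr => k _ do rewrite !mxE.
exact: sum_sqr_mean_sub_le.
Qed.

End SquaredNorm.

Lemma avg_eq_const (R : numFieldType) (K n : nat) (f : 'I_K -> 'rV[R]_n)
    (v : 'rV[R]_n) :
  (0 < K)%N -> (forall k, f k = v) -> avg f = v.
Proof.
move=> K_gt0 f_v; rewrite /avg (eq_bigr _ (fun k _ => f_v k)).
rewrite sumr_const card_ord -scaler_nat scalerA mulVf.
  by rewrite scale1r.
by rewrite pnatr_eq0 -lt0n.
Qed.

Section TDCDProcess.
Variables (R : realFieldType) (N K : nat) (D : 'I_N -> nat) (Q : nat) (eta : R).
Variable g : nat -> 'I_K -> forall j : 'I_N, blockvec R D -> 'rV[R]_(D j).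
Variable theta : nat -> 'I_K -> forall j : 'I_N, 'rV[R]_(D j).
Hypothesis K_gt0 : (0 < K)%N.
Hypothesis process : TDCD_process Q eta g theta.

Lemma TDCD_synced (s : nat) (k : 'I_K) (j : 'I_N) :
  (Q %| s)%N -> theta s k j = tilde theta s j.
Proof.
case: process => init step; case: s => [|s] Qs; first exact: init.
have same_model k' : theta s.+1 k' j = theta s.+1 k j by rewrite !step /= Qs.
by rewrite /tilde (avg_eq_const K_gt0 same_model).
Qed.

Lemma TDCD_drift (t0 d : nat) (k : 'I_K) (j : 'I_N) :
  (Q %| t0)%N -> (forall s, (t0 < s <= t0 + d)%N -> ~~ (Q %| s)%N) ->
  tilde theta t0 j - theta (t0 + d)%N k j
    = eta *: \sum_(t0 <= tau < t0 + d) g tau k j (yvec Q theta tau k j).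
Proof.
move=> Q_t0; elim: d => [|d IHd] no_sync.
  by rewrite addn0 big_geq // scaler0 TDCD_synced // subrr.
have no_sync_d s : (t0 < s <= t0 + d)%N -> ~~ (Q %| s)%N.
  by case/andP=> lo hi; apply: no_sync; rewrite lo addnS leqW.
have Q_next : ~~ (Q %| (t0 + d).+1)%N.
  by apply: no_sync; rewrite addnS ltnS leq_addr leqnn.
rewrite addnS process.2 /= (negbTE Q_next) big_nat_recr ?leq_addr //=.
by rewrite scalerDr -IHd // opprB addrCA addrC.
Qed.

Lemma TDCD_local_drift_sqnorm (t0 t : nat) (j : 'I_N) :
  (Q %| t0)%N -> (t0 <= t)%N -> (forall s, (t0 < s <= t)%N -> ~~ (Q %| s)%N) ->
  \sum_(k < K) sqnorm (tilde theta t0 j - theta t k j)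
    <= (t - t0)%:R * eta ^+ 2 *
       \sum_(k < K) \sum_(t0 <= tau < t) sqnorm (g tau k j (yvec Q theta tau k j)).
Proof.
move=> Q_t0 le_t0t no_sync; rewrite mulr_sumr; apply: ler_sum => k _.
rewrite -(subnKC le_t0t) TDCD_drift ?subnKC // sqnormZ.
rewrite [_ * eta ^+ 2]mulrC -[X in _ <= X]mulrA.
by apply: ler_wpM2l; [exact: sqr_ge0 | exact: sqnorm_sum_nat_le].
Qed.

End TDCDProcess.

Theorem lemma5 (R : realFieldType) (N K : nat) (D : 'I_N -> nat) (Q : nat)
  (eta : R)
  (g : nat -> 'I_K -> forall j : 'I_N, blockvec R D -> 'rV[R]_(D j))
  (theta : nat -> 'I_K -> forall j : 'I_N, 'rV[R]_(D j))
  (hN : (1 <= N)%N) (hK : (1 <= K)%N) (hQ : (1 <= Q)%N) (heta : 0 < eta)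
  (hproc : TDCD_process Q eta g theta)
  (t t0 : nat)
  (ht0 : (Q %| t0)%N) (ht0t : (t0 <= t)%N) (htQ : (t <= t0 + Q)%N)
  (hlast : forall s, (t0 < s < t)%N -> ~~ (Q %| s)%N)
  (j : 'I_N) :
  K%:R^-1 * \sum_(k < K) sqnorm (tilde theta t j - theta t k j)
  <= Q%:R * eta ^+ 2 / K%:R *
     \sum_(k < K) \sum_(t0 <= tau < t) sqnorm (g tau k j (yvec Q theta tau k j)).
Proof.
set S := \sum_(k < K) \sum_(t0 <= tau < t) _.
have S_ge0 : 0 <= S by do 2![apply: sumr_ge0 => ? _]; apply: sqnorm_ge0.
rewrite [X in _ <= X]mulrAC [X in X <= _]mulrC.
apply: ler_wpM2r; first by rewrite invr_ge0 ler0n.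
have [Q_t | nQ_t] := boolP (Q %| t)%N.
  rewrite big1 => [|k _]; last by rewrite (TDCD_synced hK hproc) // subrr sqnorm0.
  by rewrite mulr_ge0 // mulr_ge0 ?ler0n ?sqr_ge0.
have no_sync s : (t0 < s <= t)%N -> ~~ (Q %| s)%N.
  case/andP=> lo; rewrite leq_eqVlt => /orP[/eqP -> // | hi].
  by apply: hlast; rewrite lo.
apply: le_trans (sum_sqnorm_avg_sub_le (fun k => theta t k j) (tilde theta t0 j) hK) _.
apply: le_trans (TDCD_local_drift_sqnorm hK hproc j ht0 ht0t no_sync) _.
apply/ler_wpM2r/ler_wpM2r; rewrite ?sqr_ge0 //.
by rewrite ler_nat leq_subLR.
Qed.
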